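(* Let the sequence $r$ on positive integers be defined by $r(1)=0$, $r(k)=\frac{3k}{2}+r(\frac{k}{2})$ if $k$ is even, and $r(k)=2+\frac{3(k-1)}{2}+r(\frac{k+1}{2})$ if $k\neq1$ is odd. Then $r$ is strictly increasing. *)

From mathcomp Require Import all_boot.
Set Implicit Arguments. Unset Strict Implicit. Unset Printing Implicit Defensive.

(* The recurrence of the paper, for a sequence r : nat -> nat on positive
   integers (values at 0 are irrelevant).  All values are natural numbers:
   3k/2 with k even, and 3(k-1)/2 with k odd, are integers. *)
Definition r_rec (r : nat -> nat) : Prop :=
  [/\ r 1 = 0,
      (forall k, 0 < k -> ~~ odd k -> r k = (3 * k) %/ 2 + r (k %/ 2))
    & (forall k, 1 < k -> odd k ->
         r k = 2 + (3 * (k - 1)) %/ 2 + r ((k + 1) %/ 2))].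

From mathcomp Require Import all_boot.
From mathcomp Require Import zify.

(* Writing the recurrence at k = 2j and k = 2j + 1 gives r(2j) = 3j + r(j) and
   r(2j+1) = 2 + 3j + r(j+1).  Hence r(2j+2) - r(2j+1) = 1, while
   r(2j+1) - r(2j) = 2 + r(j+1) - r(j), which is positive by induction on j. *)

Section Recurrence.

Variable r : nat -> nat.
Hypothesis r_r : r_rec r.

Lemma r_double j : 0 < j -> r j.*2 = 3 * j + r j.
Proof.
case: r_r => _ r_even _ j_gt0.
rewrite r_even ?double_gt0 ?odd_double // -muln2 mulnK // mulnA mulnK //.
Qed.

Lemma r_doubleS j : 0 < j -> r j.*2.+1 = 2 + 3 * j + r j.+1.
Proof.
case: r_r => _ _ r_odd j_gt0.
rewrite r_odd /= ?odd_double ?ltnS ?double_gt0 // subn1 /= addn1 -doubleS.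
by rewrite -!muln2 mulnK // mulnA mulnK.
Qed.

Lemma r_ltnS k : 0 < k -> r k < r k.+1.
Proof.
elim/ltn_ind: k => k IHk k_gt0.
have [k1 | k_gt1] := leqP k 1.
  have -> : k = 1 by lia.
  by case: r_r => -> _ _; rewrite (r_double 1).
have j_gt0 : 0 < k./2 by rewrite half_gt0.
move: IHk; rewrite -[k]odd_double_half; case: (odd k) => /= IHk.
  by rewrite -doubleS r_double // r_doubleS //; lia.
have := IHk k./2 ltac:(lia) j_gt0.
by rewrite r_double // r_doubleS //; lia.
Qed.

End Recurrence.

Theorem lemma5 (r : nat -> nat) :
  r_rec r -> forall m n : nat, 0 < m -> m < n -> r m < r n.
Proof.
move=> r_r [|m] [|n] // _; rewrite ltnS.
apply: (@homo_ltn _ (fun i => r i.+1) _ ltn_trans) => i.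
exact: r_ltnS.
Qed.
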